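(* Let $\Theta$ be a space of input histories. Every input history $h\in\Theta$ has at least one tip event, i.e. $\mathrm{tips}_\Theta(h)\neq\emptyset$; and every extended input history $h\in\mathrm{Ext}(\Theta)$ with $h\notin\Theta$ has no tip events, i.e. $\mathrm{tips}_\Theta(h)=\emptyset$.
   Context: A partial function is a function $f$ with domain $\mathrm{dom}(f)$ a subset of an index set, values in given sets; ordered by restriction ($f\le g$ iff $\mathrm{dom}(f)\subseteq\mathrm{dom}(g)$, $g|_{\mathrm{dom}(f)}=f$). Compatible = agreeing on common domain; a compatible set $\mathcal F$ has join $\bigvee\mathcal F$ (union). $\Theta$ is $\vee$-prime if for compatible $\mathcal F\subseteq\Theta$ with $\bigvee\mathcal F\in\Theta$ we have $\bigvee\mathcal F\in\mathcal F$. A space of input histories is a finite $\vee$-prime set of partial functions; $\mathrm{Ext}(\Theta)=\{\bigvee\mathcal F:\emptyset\ne\mathcal F\subseteq\Theta\text{ compatible}\}$. For $h\in\mathrm{Ext}(\Theta)$, $\mathrm{tips}_\Theta(h)=\mathrm{dom}(h)\setminus\bigcup\{\mathrm{dom}(k):k\in\mathrm{Ext}(\Theta),k<h\}$. *)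

From Stdlib Require Import List.

Set Implicit Arguments.

Section PF.
Variables (I : Type) (V : I -> Type).

Definition pfun := forall i : I, option (V i).

Definition dom (f : pfun) (i : I) : Prop := f i <> None.

Definition pf_le (f g : pfun) : Prop :=
  forall i, f i <> None -> g i = f i.

Definition pf_lt (f g : pfun) : Prop := pf_le f g /\ f <> g.

Definition pfset := pfun -> Prop.

Definition subset (A B : pfset) : Prop := forall f, A f -> B f.

Definition compat (f g : pfun) : Prop :=
  forall i x y, f i = Some x -> g i = Some y -> x = y.

Definition compatible (F : pfset) : Prop :=
  forall f g, F f -> F g -> compat f g.

Definition is_join (F : pfset) (g : pfun) : Prop :=
  (forall i, dom g i <-> exists f, F f /\ dom f i) /\
  (forall f, F f -> pf_le f g).

(* Θ is ∨-prime (F ranges over all compatible subsets, including ∅). *)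
Definition join_prime (Theta : pfset) : Prop :=
  forall (F : pfset) (g : pfun),
    subset F Theta -> compatible F -> is_join F g -> Theta g -> F g.

Definition finite_set (A : pfset) : Prop :=
  exists l : list pfun, forall f, A f <-> In f l.

Definition input_history_space (Theta : pfset) : Prop :=
  finite_set Theta /\ join_prime Theta.

Definition Ext (Theta : pfset) : pfset := fun h =>
  exists F : pfset, subset F Theta /\ (exists f, F f) /\ compatible F /\
                    is_join F h.

Definition tips (Theta : pfset) (h : pfun) (i : I) : Prop :=
  dom h i /\ ~ (exists k, Ext Theta k /\ pf_lt k h /\ dom k i).

End PF.

(* If h ∈ Θ had no tip event, every event of h would lie in the domain of
   some k ∈ Ext(Θ) with k < h, hence (k being a join of members of Θ) in the
   domain of some member of Θ strictly below h.  Then h would be the join of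
   the members of Θ strictly below it, which ∨-primality forbids.  If instead
   h = ∨F ∈ Ext(Θ) \ Θ, every event of h lies in the domain of some f ∈ F,
   and f ∈ Θ lies strictly below h, so no event of h is a tip. *)

From Stdlib Require Import Classical FunctionalExtensionality.

Set Implicit Arguments.
Unset Strict Implicit.

Section InputHistories.
Variables (I : Type) (V : I -> Type).

Lemma pf_le_antisym (f g : pfun V) : pf_le f g -> pf_le g f -> f = g.
Proof.
  intros Hfg Hgf. apply functional_extensionality_dep. intro i.
  destruct (f i) eqn:Ef.
  - rewrite Hfg; rewrite Ef; [reflexivity | discriminate].
  - destruct (g i) eqn:Eg; [| reflexivity].
    rewrite <- Ef, <- Eg. apply Hgf. congruence.
Qed.

Lemma pf_le_trans (f g h : pfun V) : pf_le f g -> pf_le g h -> pf_le f h.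
Proof.
  intros Hfg Hgh i Hi. rewrite Hgh; [apply Hfg; exact Hi |].
  rewrite Hfg; exact Hi.
Qed.

Lemma pf_le_lt_trans (f g h : pfun V) : pf_le f g -> pf_lt g h -> pf_lt f h.
Proof.
  intros Hfg [Hgh Hneq]. split; [exact (pf_le_trans Hfg Hgh) |].
  intros ->. apply Hneq, pf_le_antisym; [exact Hgh | exact Hfg].
Qed.

Lemma compatible_le (F : pfset V) (h : pfun V) :
  (forall f, F f -> pf_le f h) -> compatible F.
Proof.
  intros HF f g Hf Hg i x y Efx Egy.
  rewrite <- (HF f Hf i) in Efx by congruence.
  rewrite <- (HF g Hg i) in Egy by congruence.
  congruence.
Qed.

Lemma is_join_cover (F : pfset V) (h : pfun V) :
  (forall i, dom h i -> exists f, F f /\ dom f i) ->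
  (forall f, F f -> pf_le f h) -> is_join F h.
Proof.
  intros Hcover Hle. split; [| exact Hle].
  intro i. split; [apply Hcover |].
  intros [f [Hf Hfi]]. unfold dom. rewrite (Hle f Hf i Hfi). exact Hfi.
Qed.

Lemma Ext_mem (Theta : pfset V) (f : pfun V) : Theta f -> Ext Theta f.
Proof.
  intro Hf. exists (fun g => g = f). split; [intros g ->; exact Hf |].
  split; [exists f; reflexivity |].
  assert (Hle : forall g, g = f -> pf_le g f) by (intros g -> i _; reflexivity).
  split; [exact (compatible_le Hle) |].
  apply is_join_cover; [| exact Hle].
  intros i Hi. exists f. split; [reflexivity | exact Hi].
Qed.

Lemma Ext_dom (Theta : pfset V) (k : pfun V) (i : I) :
  Ext Theta k -> dom k i -> exists f, Theta f /\ pf_le f k /\ dom f i.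
Proof.
  intros [F [HF [_ [_ [Hdom Hle]]]]] Hki.
  destruct (proj1 (Hdom i) Hki) as [f [Hf Hfi]].
  exists f. auto.
Qed.

Lemma tips_mem (Theta : pfset V) (h : pfun V) :
  join_prime Theta -> Theta h -> exists i, tips Theta h i.
Proof.
  intros Hprime Hh. apply NNPP. intro Hnotip.
  set (F := fun f => Theta f /\ pf_lt f h).
  assert (Hle : forall f, F f -> pf_le f h) by (intros f [_ [Hf _]]; exact Hf).
  assert (Hcover : forall i, dom h i -> exists f, F f /\ dom f i).
  { intros i Hi.
    assert (Hk : exists k, Ext Theta k /\ pf_lt k h /\ dom k i).
    { apply NNPP. intro Hk. apply Hnotip. exists i. split; assumption. }
    destruct Hk as [k [Hk [Hkh Hki]]].
    destruct (Ext_dom Hk Hki) as [f [Hf [Hfk Hfi]]].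
    exists f. split; [split; [exact Hf | exact (pf_le_lt_trans Hfk Hkh)] | exact Hfi]. }
  assert (HFh : F h).
  { apply Hprime; [intros f [Hf _]; exact Hf | exact (compatible_le Hle) |
                   exact (is_join_cover Hcover Hle) | exact Hh]. }
  destruct HFh as [_ [_ Hneq]]. apply Hneq. reflexivity.
Qed.

Lemma tips_Ext_notin (Theta : pfset V) (h : pfun V) (i : I) :
  Ext Theta h -> ~ Theta h -> ~ tips Theta h i.
Proof.
  intros Hh Hnotin [Hhi Hnotip].
  destruct (Ext_dom Hh Hhi) as [f [Hf [Hfh Hfi]]].
  apply Hnotip. exists f. split; [exact (Ext_mem Hf) |].
  split; [split; [exact Hfh | intros ->; exact (Hnotin Hf)] | exact Hfi].
Qed.

End InputHistories.

Theorem proposition15 (I : Type) (V : I -> Type) (Theta : pfset V) :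
  input_history_space Theta ->
  (forall h, Theta h -> exists i, tips Theta h i) /\
  (forall h, Ext Theta h -> ~ Theta h -> forall i, ~ tips Theta h i).
Proof.
  intros [_ Hprime]. split.
  - intros h Hh. exact (tips_mem Hprime Hh).
  - intros h Hh Hnotin i. exact (tips_Ext_notin Hh Hnotin).
Qed.
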